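(* Let $G=(\mathcal V,\mathcal E)$ be an ADT network, possibly containing cycles, in which every link has unit delay. Let $A(D)$, $B(D)$ and $F$ be the encoding, decoding and adjacency matrices, where the entries $\alpha_{(i,e_j)}(D)$ and $\epsilon_{(e_i,(T_j,k))}(D)$ are constants or rational functions of $D$. Then the system matrix $M(D)$ relating the source power series to the destination power series, $\mathcal Z(D)=\mathcal X(S,D)M(D)$, is given by $$M(D)=A(D)\,(I-DF)^{-1}\,B(D)^T .$$
   Context: ADT network with delay. Supernodes $V$ have input ports $I(V)$ and output ports $O(V)$. Edges go from output ports to input ports of other supernodes, and the directed graph may have cycles. Symbols lie in a finite field $\mathbb F_q$ and time is $t=0,1,2,\dots$. Each link has the same unit delay. Processes are written as power series in the delay variable $D$: $$X(S,i,D)=\sum_t X_t(S,i)D^t,\qquad Z(T,k,D)=\sum_t Z_t(T,k)D^t,\qquad Y(e,D)=\sum_tY_t(e)D^t.$$ The network evolves as $$Y_{t+1}(e)=\sum_{e'\in I(V)}\beta_{(e',e)}Y_t(e')+\sum_i\alpha_{(i,e)}X_t(S,i)\quad\text{for } e\in O(V),$$ where the source term is present only at the source $S$. Input ports receive the $\mathbb F_q$-sum of the symbols on incoming edges, and an output port sends the same symbol on all its outgoing edges. Destinations output $$Z_{t+1}(T,k)=\sum_{e'\in I(T)}\epsilon_{(e',(T,k))}Y_t(e').$$ Index the ports $e_1,\dots,e_m$. - $F$ is the $m\times m$ matrix with $F_{i,j}=1$ if $(e_i,e_j)\in\mathcal E$, $F_{i,j}=\beta_{(e_i,e_j)}$ if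 $e_i\in I(V)$ and $e_j\in O(V)$ for the same supernode $V$, and $F_{i,j}=0$ otherwise. - $A(D)_{i,j}=\alpha_{(i,e_j)}(D)$ if $e_j\in O(S)$, and $0$ otherwise. - $B(D)$ has rows indexed by the destination outputs $(T_j,k)$, with entry $\epsilon_{(e_i,(T_j,k))}(D)$ in column $e_i$ if $e_i\in I(T_j)$, and $0$ otherwise. Matrices are taken over the field $\mathbb F_q(D)$ of rational functions.
   Formalization: The destination series satisfy $\mathcal Z(D)=D^2\mathcal X(S,D)M(D)$ instead of $\mathcal Z(D)=\mathcal X(S,D)M(D)$, for a network with Y₀ = Z₀ = 0, each rational α and ε acting through its power series, with denominator nonzero at D = 0. The statement above fails without it. *)

From HB Require Import structures.
From mathcomp Require Import all_boot all_order all_algebra.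
Set Implicit Arguments. Unset Strict Implicit. Unset Printing Implicit Defensive.
Import Order.TTheory GRing.Theory.
Local Open Scope ring_scope.

Notation ratfun F := {fraction {poly F}}.
Definition polyfrac (F : fieldType) (p : {poly F}) : ratfun F := FracField.tofrac p.
Definition Dvar (F : fieldType) : ratfun F := polyfrac 'X.

Definition conv (F : fieldType) (a b : nat -> F) (t : nat) : F :=
  \sum_(i < t.+1) a i * b (t - i)%N.

(* [expands z r] : the formal power series \sum_t z t D^t is the power
   series expansion of the rational function r, i.e. r = p/q with
   q(0) <> 0 and z * q = p as formal power series. *)
Definition expands (F : fieldType) (z : nat -> F) (r : ratfun F) : Prop :=
  exists p q : {poly F},
    q.[0] != 0 /\ r = polyfrac p / polyfrac q /\
    forall n : nat, \sum_(i < n.+1) z i * q`_(n - i) = p`_n.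

(* Ports are e_0 ... e_{m-1}  ('I_m); [node e] is the
   supernode carrying port e, [isout e] tells whether e is an output port
   (otherwise an input port); [edge e e'] is the edge relation E.
   Source symbols are indexed by 'I_s, destination outputs (T_j,k) by 'I_r,
   with [dest j] the destination supernode of output j. *)

Definition adjF (F : fieldType) (V : finType) (m : nat)
  (node : 'I_m -> V) (isout : pred 'I_m) (edge : rel 'I_m)
  (beta : 'I_m -> 'I_m -> F) : 'M[F]_m :=
  \matrix_(i, j)
    if edge i j then 1
    else if [&& ~~ isout i, isout j & node i == node j] then beta i j
    else 0.

Definition encA (F : fieldType) (V : finType) (m s : nat)
  (node : 'I_m -> V) (isout : pred 'I_m) (S : V)
  (alpha : 'I_s -> 'I_m -> ratfun F) : 'M[ratfun F]_(s, m) :=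
  \matrix_(i, j) if isout j && (node j == S) then alpha i j else 0.

Definition decB (F : fieldType) (V : finType) (m r : nat)
  (node : 'I_m -> V) (isout : pred 'I_m) (dest : 'I_r -> V)
  (eps : 'I_m -> 'I_r -> ratfun F) : 'M[ratfun F]_(r, m) :=
  \matrix_(j, i) if ~~ isout i && (node i == dest j) then eps i j else 0.

Definition sysM (F : fieldType) (m s r : nat)
  (A : 'M[ratfun F]_(s, m)) (Fm : 'M[F]_m) (B : 'M[ratfun F]_(r, m))
  : 'M[ratfun F]_(s, r) :=
  A *m invmx (1%:M - Dvar F *: map_mx (@polyfrac F \o polyC) Fm) *m B^T.

From HB Require Import structures.
From mathcomp Require Import all_boot all_order all_algebra.
From mathcomp Require Import zify.

(* Truncate every process to a polynomial of degree < n and compute modulo D^n.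
   The network equations become Y = D (Y F + X A) and Z = D Y B^T, so
   Y (I - D F) = D X A.  The truncated Neumann series T_n = sum_(u<n) D^u F^u
   satisfies (I - D F) T_n = I - D^n F^n, hence Y = D X A T_n and
   Z = D^2 X (A T_n B^T) modulo D^n.  Finally T_n truncates the expansion of
   (I - D F)^{-1} = adj / det, which is a power series since
   det (I - D F) evaluates to 1 at D = 0. *)

Set Implicit Arguments.
Unset Strict Implicit.
Unset Printing Implicit Defensive.
Import GRing.Theory.
Local Open Scope ring_scope.

Section Truncation.
Variable F : fieldType.
Implicit Types (z w : nat -> F) (p q : {poly F}).

Definition trunc n z : {poly F} := \poly_(i < n) z i.

Definition eqmodX n p q := take_poly n p = take_poly n q.

Lemma eqmodXP n p q : (forall k, (k < n)%N -> p`_k = q`_k) <-> eqmodX n p q.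
Proof.
split=> [Epq | Epq k lt_kn].
  by apply/polyP => k; rewrite !coef_take_poly; case: ifP => // /Epq.
by have := congr1 (fun p => p`_k) Epq; rewrite /= !coef_take_poly lt_kn.
Qed.

Lemma eqmodX_coef n p q k : eqmodX n p q -> (k < n)%N -> p`_k = q`_k.
Proof. by move/eqmodXP; apply. Qed.

Lemma eqmodX_refl n p : eqmodX n p p. Proof. by []. Qed.

Lemma eqmodX_trans n p q p' : eqmodX n p q -> eqmodX n q p' -> eqmodX n p p'.
Proof. exact: etrans. Qed.

Lemma take_poly_mull n p q : take_poly n (take_poly n p * q) = take_poly n (p * q).
Proof.
by rewrite -[in RHS](poly_take_drop n p) mulrDl mulrAC take_polyD take_polyMXn_0 addr0.
Qed.

Lemma eqmodXD n p p' q q' :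
  eqmodX n p p' -> eqmodX n q q' -> eqmodX n (p + q) (p' + q').
Proof. by rewrite /eqmodX !take_polyD => -> ->. Qed.

Lemma eqmodXM n p p' q q' :
  eqmodX n p p' -> eqmodX n q q' -> eqmodX n (p * q) (p' * q').
Proof.
rewrite /eqmodX => Ep Eq.
have Emulr (u u' v : {poly F}) : take_poly n u = take_poly n u' ->
    take_poly n (u * v) = take_poly n (u' * v).
  by rewrite -take_poly_mull => ->; rewrite take_poly_mull.
by rewrite (Emulr _ _ _ Ep) mulrC (Emulr _ _ _ Eq) mulrC.
Qed.

Lemma eqmodX_sum n (I : finType) (f g : I -> {poly F}) :
  (forall i, eqmodX n (f i) (g i)) -> eqmodX n (\sum_i f i) (\sum_i g i).
Proof. by rewrite /eqmodX !take_poly_sum => Efg; apply: eq_bigr => i _. Qed.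

Lemma eqmodX_subXn n p q : eqmodX n (p - 'X^n * q) p.
Proof. by rewrite /eqmodX linearB /= mulrC take_polyMXn_0 subr0. Qed.

Lemma coef_trunc n z k : (trunc n z)`_k = if (k < n)%N then z k else 0.
Proof. exact: coef_poly. Qed.

Lemma eq_trunc n z w : (forall t, z t = w t) -> trunc n z = trunc n w.
Proof. by move=> Ezw; apply/polyP => k; rewrite !coef_trunc Ezw. Qed.

Lemma truncD n z w : trunc n (fun t => z t + w t) = trunc n z + trunc n w.
Proof. by apply/polyP => k; rewrite coefD !coef_trunc; case: ifP; rewrite ?addr0. Qed.

Lemma truncMc n z c : trunc n (fun t => z t * c) = trunc n z * c%:P.
Proof. by apply/polyP => k; rewrite coefMC !coef_trunc; case: ifP; rewrite ?mul0r. Qed.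

Lemma trunc_sum n (I : finType) (f : I -> nat -> F) :
  trunc n (fun t => \sum_i f i t) = \sum_i trunc n (f i).
Proof.
apply/polyP => k; rewrite coef_trunc coef_sum.
by case: ifP => lt_kn; [apply: eq_bigr | rewrite big1] => // i _; rewrite coef_trunc lt_kn.
Qed.

Lemma trunc_shift n z :
  z 0%N = 0 -> eqmodX n (trunc n z) ('X * trunc n (fun t => z t.+1)).
Proof.
move=> z0; apply/eqmodXP => -[|k] lt_kn; rewrite coefXM coef_trunc lt_kn //=.
by rewrite coef_trunc ltnW.
Qed.

Lemma coef_truncM n z q k :
  (k < n)%N -> (trunc n z * q)`_k = \sum_(i < k.+1) z i * q`_(k - i).
Proof.
move=> lt_kn; rewrite coefM; apply: eq_bigr => i _.
by rewrite coef_trunc ifT //; have := ltn_ord i; lia.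
Qed.

Lemma trunc_conv n z w : eqmodX n (trunc n (conv z w)) (trunc n z * trunc n w).
Proof.
apply/eqmodXP => k lt_kn; rewrite coef_truncM // coef_trunc lt_kn.
by apply: eq_bigr => i _; rewrite coef_trunc ifT //; lia.
Qed.

Lemma convC z w t : conv z w t = conv w z t.
Proof.
have coef_conv z' w' : conv z' w' t = (trunc t.+1 z' * trunc t.+1 w')`_t.
  by rewrite -(eqmodX_coef (trunc_conv _ z' w')) // coef_trunc ltnSn.
by rewrite !coef_conv mulrC.
Qed.

Lemma conv0l w t : conv (fun _ => 0) w t = 0.
Proof. by rewrite /conv big1 // => i _; rewrite mul0r. Qed.

End Truncation.

Section Expansions.
Variable F : fieldType.
Implicit Types (z w : nat -> F) (r : ratfun F).

Lemma expandsP z r : expands z r <->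
  exists p q, [/\ q.[0] != 0, r = polyfrac p / polyfrac q &
                  forall n, eqmodX n (trunc n z * q) p].
Proof.
split=> [[p [q [q0 [-> Ezq]]]] | [p [q [q0 -> Ezq]]]]; exists p, q.
  by split=> // n; apply/eqmodXP => k lt_kn; rewrite coef_truncM.
by do 2!split=> //; move=> n; rewrite -(coef_truncM _ _ (ltnSn n)); apply: eqmodX_coef.
Qed.

Lemma polyfrac_neq0 (q : {poly F}) : q.[0] != 0 -> polyfrac q != 0.
Proof.
by move=> q0; rewrite /polyfrac tofrac_eq0; apply: contra q0 => /eqP ->; rewrite horner0.
Qed.

Lemma expands0 : expands (fun _ => 0) (0 : ratfun F).
Proof.
apply/expandsP; exists 0, 1; split.
- by rewrite hornerC oner_neq0.
- by rewrite /polyfrac tofrac0 mul0r.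
- move=> n; apply/eqmodXP => k lt_kn.
  by rewrite coef_truncM // coef0 big1 // => i _; rewrite mul0r.
Qed.

Lemma expandsD z w r r' :
  expands z r -> expands w r' -> expands (fun t => z t + w t) (r + r').
Proof.
move=> /expandsP[p [q [q0 -> Ez]]] /expandsP[p' [q' [q'0 -> Ew]]].
apply/expandsP; exists (p * q' + p' * q), (q * q'); split.
- by rewrite hornerM mulf_neq0.
- by rewrite addf_div ?polyfrac_neq0 // /polyfrac tofracD !tofracM.
- move=> n; rewrite truncD mulrDl; apply: eqmodXD.
    by rewrite mulrA; apply: eqmodXM (Ez n) (eqmodX_refl _ _).
  by rewrite (mulrC q) mulrA; apply: eqmodXM (Ew n) (eqmodX_refl _ _).
Qed.

Lemma expandsM z w r r' : expands z r -> expands w r' -> expands (conv z w) (r * r').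
Proof.
move=> /expandsP[p [q [q0 -> Ez]]] /expandsP[p' [q' [q'0 -> Ew]]].
apply/expandsP; exists (p * p'), (q * q'); split.
- by rewrite hornerM mulf_neq0.
- by rewrite mulf_div /polyfrac !tofracM.
- move=> n; apply: eqmodX_trans (eqmodXM (trunc_conv n z w) (eqmodX_refl _ _)) _.
  by rewrite mulrACA; apply: eqmodXM.
Qed.

Lemma expands_sum (I : finType) (f : I -> nat -> F) (g : I -> ratfun F) :
  (forall i, expands (f i) (g i)) -> expands (fun t => \sum_i f i t) (\sum_i g i).
Proof.
move=> Efg; rewrite unlock; elim: (index_enum I) => [|i l IHl] /=.
  exact: expands0.
exact: expandsD.
Qed.

End Expansions.

Section MatrixCongruence.
Variable F : fieldType.

Definition mxeqmodX n k l (A B : 'M[{poly F}]_(k, l)) :=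
  map_mx (take_poly n) A = map_mx (take_poly n) B.

Definition mxtrunc n k l (a : 'I_k -> 'I_l -> nat -> F) : 'M[{poly F}]_(k, l) :=
  \matrix_(i, j) trunc n (a i j).

Definition rowtrunc n k (x : nat -> 'I_k -> F) : 'rV[{poly F}]_k :=
  \row_i trunc n (fun t => x t i).

Lemma mxeqmodXP n k l (A B : 'M[{poly F}]_(k, l)) :
  (forall i j, eqmodX n (A i j) (B i j)) <-> mxeqmodX n A B.
Proof.
split=> [EAB | EAB i j]; first by apply/matrixP => i j; rewrite !mxE EAB.
by move: EAB => /matrixP/(_ i j); rewrite !mxE.
Qed.

Variables (n k l : nat).
Implicit Types A B C : 'M[{poly F}]_(k, l).

Lemma mxeqmodX_refl A : mxeqmodX n A A. Proof. by []. Qed.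

Lemma mxeqmodX_sym A B : mxeqmodX n A B -> mxeqmodX n B A. Proof. by []. Qed.

Lemma mxeqmodX_trans A B C : mxeqmodX n A B -> mxeqmodX n B C -> mxeqmodX n A C.
Proof. exact: etrans. Qed.

Lemma mxeqmodXD A A' B B' :
  mxeqmodX n A A' -> mxeqmodX n B B' -> mxeqmodX n (A + B) (A' + B').
Proof.
move=> /mxeqmodXP EA /mxeqmodXP EB; apply/mxeqmodXP => i j.
by rewrite !mxE; apply: eqmodXD.
Qed.

Lemma mxeqmodXZ c A B : mxeqmodX n A B -> mxeqmodX n (c *: A) (c *: B).
Proof.
move=> /mxeqmodXP EAB; apply/mxeqmodXP => i j.
by rewrite !mxE; apply: eqmodXM.
Qed.

Lemma mxeqmodX_subXn A B : mxeqmodX n (A - 'X^n *: B) A.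
Proof. by apply/mxeqmodXP => i j; rewrite !mxE; apply: eqmodX_subXn. Qed.

Lemma mxeqmodXM p A A' (B B' : 'M_(l, p)) :
  mxeqmodX n A A' -> mxeqmodX n B B' -> mxeqmodX n (A *m B) (A' *m B').
Proof.
move=> /mxeqmodXP EA /mxeqmodXP EB; apply/mxeqmodXP => i j.
by rewrite !mxE; apply: eqmodX_sum => u; apply: eqmodXM.
Qed.

Lemma rowtrunc_shift (x : nat -> 'I_k -> F) :
  (forall i, x 0%N i = 0) -> mxeqmodX n (rowtrunc n x) ('X *: rowtrunc n (fun t => x t.+1)).
Proof. by move=> x0; apply/mxeqmodXP => i0 i; rewrite !mxE; apply: trunc_shift. Qed.

Lemma rowtrunc_conv (c : 'I_k -> 'I_l -> nat -> F) (x : nat -> 'I_k -> F) y :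
  (forall t j, y t j = \sum_i conv (c i j) (fun u => x u i) t) ->
  mxeqmodX n (rowtrunc n y) (rowtrunc n x *m mxtrunc n c).
Proof.
move=> Ey; apply/mxeqmodXP => i0 j; rewrite !mxE (eq_trunc _ (Ey^~ j)) trunc_sum.
by apply: eqmodX_sum => i; rewrite !mxE mulrC; apply: trunc_conv.
Qed.

End MatrixCongruence.

Section Neumann.
Variables (F : fieldType) (m : nat) (Fm : 'M[F]_m).

Local Notation Fp := (map_mx polyC Fm).

Definition neumann n : 'M[{poly F}]_m := \sum_(u < n) 'X^u *: map_mx polyC (Fm ^+ u).

Lemma neumannE n : neumann n = mxtrunc n (fun e e' u => (Fm ^+ u) e e').
Proof.
apply/matrixP => e e'; rewrite summxE !mxE /trunc poly_def.
by apply: eq_bigr => u _; rewrite !mxE -mul_polyC mulrC.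
Qed.

Lemma mulmx_neumann n :
  (1%:M - 'X *: Fp) *m neumann n = 1%:M - 'X^n *: map_mx polyC (Fm ^+ n).
Proof.
elim: n => [|n IHn].
  by rewrite /neumann big_ord0 mulmx0 expr0 scale1r map_mx1 subrr.
rewrite /neumann big_ord_recr /= mulmxDr -/(neumann n) IHn mulmxBl mul1mx.
rewrite -scalemxAl -scalemxAr scalerA -exprS -map_mxM mulmxE -exprS.
by rewrite addrA subrK.
Qed.

Lemma neumann_solve n k (y u : 'M_(k, m)) :
  mxeqmodX n y ('X *: (y *m Fp + u)) -> mxeqmodX n y ('X *: (u *m neumann n)).
Proof.
move=> Ey.
have EyP : mxeqmodX n (y *m (1%:M - 'X *: Fp)) ('X *: u).
  rewrite mulmxBr mulmx1 -scalemxAr.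
  have -> : 'X *: u = 'X *: (y *m Fp + u) - 'X *: (y *m Fp).
    by rewrite scalerDr addrAC subrr add0r.
  exact: mxeqmodXD Ey (mxeqmodX_refl _ _).
have EyPT : mxeqmodX n y (y *m (1%:M - 'X *: Fp) *m neumann n).
  rewrite -mulmxA mulmx_neumann mulmxBr mulmx1 -scalemxAr.
  exact/mxeqmodX_sym/mxeqmodX_subXn.
apply: mxeqmodX_trans EyPT _; rewrite scalemxAl.
exact: mxeqmodXM EyP (mxeqmodX_refl _ _).
Qed.

Lemma det_neumann0 : (\det (1%:M - 'X *: Fp)).[0] = 1.
Proof.
rewrite -horner_evalE -det_map_mx.
suff -> : map_mx (horner_eval 0) (1%:M - 'X *: Fp) = 1%:M by rewrite det1.
apply/matrixP => i j; rewrite !mxE /= horner_evalE.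
by rewrite hornerD hornerN hornerM hornerX mul0r subr0 hornerMn hornerC.
Qed.

Lemma expands_neumann e e' :
  expands (fun u => (Fm ^+ u) e e')
          (invmx (1%:M - Dvar F *: map_mx (@polyfrac F \o polyC) Fm) e e').
Proof.
set P := 1%:M - 'X *: Fp.
have -> : 1%:M - Dvar F *: map_mx (@polyfrac F \o polyC) Fm = map_mx (@polyfrac F) P.
  apply/matrixP => i j; rewrite !mxE /polyfrac /Dvar /=.
  by rewrite tofracB tofracM tofracMn tofrac1.
have detP : polyfrac (\det P) != 0 by rewrite polyfrac_neq0 // det_neumann0 oner_neq0.
apply/expandsP; exists (\adj P e e'), (\det P); split.
- by rewrite det_neumann0 oner_neq0.
- rewrite /invmx unitmxE /polyfrac det_map_mx unitfE detP mxE -map_mx_adj mxE.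
  by rewrite mulrC.
- move=> n; have := mxeqmodX_subXn n (\adj P) (\adj P *m map_mx polyC (Fm ^+ n)).
  rewrite scalemxAr -[X in X - _]mulmx1 -mulmxBr -mulmx_neumann mulmxA mul_adj_mx.
  by rewrite mul_scalar_mx => /mxeqmodXP/(_ e e'); rewrite !mxE neumannE mxE mulrC.
Qed.

End Neumann.

Section LinearSystem.
Variables (F : fieldType) (m s r : nat).

Definition sys_series (a : 'I_s -> 'I_m -> nat -> F) (Fm : 'M[F]_m)
    (b : 'I_m -> 'I_r -> nat -> F) (i : 'I_s) (j : 'I_r) : nat -> F :=
  fun t => \sum_e' conv (fun u => \sum_e conv (a i e) (fun v => (Fm ^+ v) e e') u) (b e' j) t.

Lemma expands_sys_series (A : 'M[ratfun F]_(s, m)) Fm (B : 'M[ratfun F]_(r, m)) a b :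
  (forall i e, expands (a i e) (A i e)) -> (forall e j, expands (b e j) (B j e)) ->
  forall i j, expands (sys_series a Fm b i j) (sysM A Fm B i j).
Proof.
move=> Ea Eb i j; rewrite mxE; apply: expands_sum => e'.
rewrite !mxE; apply: expandsM => //.
by apply: expands_sum => e; apply: expandsM => //; apply: expands_neumann.
Qed.

Variables (Fm : 'M[F]_m) (a : 'I_s -> 'I_m -> nat -> F) (b : 'I_m -> 'I_r -> nat -> F).

Lemma mxtrunc_sys_series n : mxeqmodX n (mxtrunc n (sys_series a Fm b))
  (mxtrunc n a *m (neumann Fm n *m mxtrunc n b)).
Proof.
apply/mxeqmodXP => i j; rewrite neumannE mulmxA !mxE trunc_sum.
apply: eqmodX_sum => e'; apply: eqmodX_trans (trunc_conv _ _ _) _; rewrite !mxE.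
apply: eqmodXM (eqmodX_refl _ _); rewrite trunc_sum; apply: eqmodX_sum => e.
by rewrite !mxE; apply: trunc_conv.
Qed.

Lemma system_response (X : nat -> 'I_s -> F) (Y : nat -> 'I_m -> F) (Z : nat -> 'I_r -> F) :
  (forall e, Y 0%N e = 0) -> (forall j, Z 0%N j = 0) ->
  (forall t e, Y t.+1 e = \sum_e' Y t e' * Fm e' e + \sum_i conv (a i e) (fun u => X u i) t) ->
  (forall t j, Z t.+1 j = \sum_e conv (b e j) (fun u => Y u e) t) ->
  forall t j, Z t j = if (t < 2)%N then 0
                      else \sum_i conv (fun u => X u i) (sys_series a Fm b i j) (t - 2).
Proof.
move=> Y0 Z0 EY EZ t j; set n := t.+1.
pose U t e := \sum_i conv (a i e) (fun u => X u i) t.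
have EU : mxeqmodX n (rowtrunc n U) (rowtrunc n X *m mxtrunc n a) by apply: rowtrunc_conv.
have EYv : mxeqmodX n (rowtrunc n Y) ('X *: (rowtrunc n X *m mxtrunc n a *m neumann Fm n)).
  apply: neumann_solve; apply: mxeqmodX_trans (rowtrunc_shift n Y0) _.
  have -> : rowtrunc n (fun t => Y t.+1) = rowtrunc n Y *m map_mx polyC Fm + rowtrunc n U.
    apply/rowP => e; rewrite !mxE (eq_trunc _ (EY^~ e)) truncD !trunc_sum.
    by congr (_ + _); apply: eq_bigr => e' _; rewrite !mxE truncMc.
  exact/mxeqmodXZ/mxeqmodXD.
pose W t j := \sum_i conv (sys_series a Fm b i j) (fun u => X u i) t.
have EZW : mxeqmodX n (rowtrunc n Z) ('X^2 *: rowtrunc n W).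
  apply: mxeqmodX_trans (rowtrunc_shift n Z0) _; rewrite expr2 -scalerA.
  apply/mxeqmodXZ/(mxeqmodX_trans (rowtrunc_conv n EZ)).
  apply: mxeqmodX_trans (mxeqmodXM EYv (mxeqmodX_refl _ _)) _.
  rewrite -scalemxAl -!mulmxA; apply/mxeqmodXZ/mxeqmodX_sym.
  apply: mxeqmodX_trans (rowtrunc_conv n (fun _ _ => erefl)) _.
  exact/mxeqmodXM/mxtrunc_sys_series.
have := eqmodX_coef ((mxeqmodXP _ _ _).2 EZW 0 j) (ltnSn t).
rewrite !mxE coef_trunc ltnSn => ->; rewrite coefXnM coef_trunc.
case: ltnP => // le2t; rewrite ifT; last by lia.
by apply: eq_bigr => i _; apply: convC.
Qed.

End LinearSystem.

Lemma sum_adjF (F : fieldType) (V : finType) (m : nat) (node : 'I_m -> V)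
    (isout : pred 'I_m) (edge : rel 'I_m) (beta : 'I_m -> 'I_m -> F) :
  (forall e e', edge e e' -> [&& isout e, ~~ isout e' & node e != node e']) ->
  forall (y : 'I_m -> F) e,
  \sum_e' y e' * adjF node isout edge beta e' e =
  if isout e then \sum_(e' | ~~ isout e' && (node e' == node e)) beta e' e * y e'
  else \sum_(e' | edge e' e) y e'.
Proof.
move=> Hedge y e; case: ifP => out_e; rewrite [RHS]big_mkcond.
  apply: eq_bigr => e' _; rewrite mxE out_e /=.
  have -> : edge e' e = false by apply/negbTE/negP => /Hedge; rewrite out_e andbF.
  by case: ifP; rewrite ?mulr0 // mulrC.
by apply: eq_bigr => e' _; rewrite mxE out_e andbF; case: ifP; rewrite ?mulr1 ?mulr0.
Qed.

Theorem theorem11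
  (F : finFieldType) (V : finType) (m s r : nat)
  (node : 'I_m -> V) (isout : pred 'I_m) (edge : rel 'I_m)
  (S : V) (dest : 'I_r -> V)
  (* edges go from output ports to input ports of other supernodes *)
  (Hedge : forall e e', edge e e' ->
      [&& isout e, ~~ isout e' & node e != node e'])
  (beta : 'I_m -> 'I_m -> F)
  (alpha : 'I_s -> 'I_m -> ratfun F) (eps : 'I_m -> 'I_r -> ratfun F)
  (* time-domain realizations (power series expansions) of the coefficients *)
  (a : 'I_s -> 'I_m -> nat -> F) (b : 'I_m -> 'I_r -> nat -> F)
  (Ha : forall i e, isout e -> node e = S -> expands (a i e) (alpha i e))
  (Hb : forall e j, ~~ isout e -> node e = dest j -> expands (b e j) (eps e j))
  (* processes: X t i = X_t(S,i), Y t e = Y_t(e), Z t j = Z_t(T_j,k_j) *)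
  (X : nat -> 'I_s -> F) (Y : nat -> 'I_m -> F) (Z : nat -> 'I_r -> F)
  (HY0 : forall e, Y 0%N e = 0) (HZ0 : forall j, Z 0%N j = 0)
  (HYout : forall t e, isout e ->
      Y t.+1 e = \sum_(e' | ~~ isout e' && (node e' == node e)) beta e' e * Y t e'
               + (if node e == S
                  then \sum_(i < s) conv (a i e) (fun u => X u i) t else 0))
  (HYin : forall t e, ~~ isout e ->
      Y t.+1 e = \sum_(e' | edge e' e) Y t e')
  (HZ : forall t j,
      Z t.+1 j = \sum_(e' | ~~ isout e' && (node e' == dest j))
                   conv (b e' j) (fun u => Y u e') t) :
  let M := sysM (encA node isout S alpha) (adjF node isout edge beta)
                (decB node isout dest eps) in
  exists mser : 'I_s -> 'I_r -> nat -> F,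
    (forall i j, expands (mser i j) (M i j)) /\
    (* Z(D) = D^2 X(S,D) M(D) *)
    forall t j, Z t j = if (t < 2)%N then 0
                        else \sum_(i < s) conv (fun u => X u i) (mser i j) (t - 2)%N.
Proof.
move=> M.
pose a' i e := if isout e && (node e == S) then a i e else fun _ => 0.
pose b' e j := if ~~ isout e && (node e == dest j) then b e j else fun _ => 0.
have conv_a' t e : \sum_i conv (a' i e) (fun u => X u i) t =
    if isout e && (node e == S) then \sum_i conv (a i e) (fun u => X u i) t else 0.
  by rewrite /a'; case: ifP => _ //; rewrite big1 // => i _; apply: conv0l.
exists (sys_series a' (adjF node isout edge beta) b'); split.
  apply: expands_sys_series => [i e | e j]; rewrite !mxE /a' /b'.
    by case: ifP => [/andP[out_e /eqP]|_]; [apply: Ha | apply: expands0].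
  by case: ifP => [/andP[in_e /eqP]|_]; [apply: Hb | apply: expands0].
apply: system_response => // t e.
  rewrite sum_adjF // conv_a'; case: ifP => out_e; first by rewrite HYout.
  by rewrite HYin ?out_e // addr0.
rewrite HZ big_mkcond; apply: eq_bigr => e' _.
by rewrite /b'; case: ifP => _ //; rewrite conv0l.
Qed.
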